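(* Let $(u_S,u_R)$ be an environment that is jointly-inclusive and satisfies partitional-unique-response and scant-indifferences. If commitment has no value, then the environment is felicitous.
   Context: $A=\{a_1,\dots,a_{|A|}\}$ and $\Omega$ are finite nonempty sets, $\mu_0$ a prior on $\Omega$ with $\mu_0(\omega)>0$ for all $\omega$, $M$ a finite message set with $|M|>\max\{|\Omega|,|A|\}$. An environment is a pair of functions $u_S,u_R:A\times\Omega\to[0,1]$. Messaging strategies $\sigma:\Omega\to\Delta M$, action strategies $\rho:M\to\Delta A$, $U_i(\sigma,\rho)=\sum_{\omega,m,a}\mu_0(\omega)\sigma(m|\omega)\rho(a|m)u_i(a,\omega)$. $(\sigma,\rho)$ is S-BR if $\sigma\in\arg\max_{\sigma'}U_S(\sigma',\rho)$ and R-BR if $\rho\in\arg\max_{\rho'}U_R(\sigma,\rho')$. The persuasion payoff is the maximum of $U_S$ over R-BR profiles; the cheap-talk payoff is the maximum over profiles that are S-BR and R-BR; commitment has no value if they are equal. Jointly-inclusive: for every $a\in A$ there is $\omega$ such that $u_S(a,\omega)>u_S(a',\omega)$ and $u_R(a,\omega)>u_R(a',\omega)$ for all $a'\neq a$. Partitional-unique-response: for every nonempty $\hat\Omega\subseteq\Omega$, $\arg\max_{a}\sum_{\omega\in\hat\Omega}\mu_0(\omega)u_R(a,\omega)$ is a singleton. Scant-indifferences: with $\mathbf u_S(a)=u_S(a,\cdot)\in\mathbb R^{|\Omega|}$, $\mathbf u_R(a)=u_R(a,\cdot)$, for each $i$ the expanded-indifference matrix $T^i$ has $|\Omega|$ columns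 and rows $\mathbf u_S(a_j)-\mathbf u_S(a_i)$ ($j\ne i$), $\mathbf u_R(a_j)-\mathbf u_R(a_i)$ ($j\ne i$), and the rows of the $|\Omega|\times|\Omega|$ identity; scant-indifferences holds if for each $i$ every matrix obtained from $T^i$ by deleting some rows has full rank. Felicitous: with $\Omega_i^{u_S}=\{\omega:a_i\in\arg\max_a u_S(a,\omega)\}$, for every $i$ with $\Omega_i^{u_S}\ne\emptyset$, $a_i\in\arg\max_a\sum_{\omega\in\Omega_i^{u_S}}\mu_0(\omega)u_R(a,\omega)$. *)

From HB Require Import structures.
From mathcomp Require Import all_boot all_order all_algebra.
From mathcomp Require Import reals.
Set Implicit Arguments. Unset Strict Implicit. Unset Printing Implicit Defensive.
Import Order.TTheory GRing.Theory Num.Theory.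
Local Open Scope ring_scope.

Section Game.
Variables (R : realType) (A W M : finType).
(* W plays the role of Omega (states). *)
Variable mu0 : W -> R.
Variables uS uR : A -> W -> R.

Definition is_dist (T : finType) (p : T -> R) : Prop :=
  (forall x, 0 <= p x) /\ \sum_x p x = 1.

Definition msg_strategy (sigma : W -> M -> R) : Prop :=
  forall w, is_dist (sigma w).
Definition act_strategy (rho : M -> A -> R) : Prop :=
  forall m, is_dist (rho m).

Definition payoff (u : A -> W -> R) (sigma : W -> M -> R) (rho : M -> A -> R) : R :=
  \sum_w \sum_m \sum_a mu0 w * sigma w m * rho m a * u a w.

Definition US := payoff uS.
Definition UR := payoff uR.

Definition S_BR sigma rho : Prop :=
  forall sigma', msg_strategy sigma' -> US sigma' rho <= US sigma rho.
Definition R_BR sigma rho : Prop :=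
  forall rho', act_strategy rho' -> UR sigma rho' <= UR sigma rho.

Definition is_max (S : R -> Prop) (v : R) : Prop :=
  S v /\ forall x, S x -> x <= v.

Definition persuasion_values (v : R) : Prop :=
  exists sigma rho, [/\ msg_strategy sigma, act_strategy rho,
    R_BR sigma rho & v = US sigma rho].
Definition cheap_talk_values (v : R) : Prop :=
  exists sigma rho, [/\ msg_strategy sigma, act_strategy rho,
    S_BR sigma rho, R_BR sigma rho & v = US sigma rho].

Definition commitment_no_value : Prop :=
  exists v, is_max persuasion_values v /\ is_max cheap_talk_values v.

Definition jointly_inclusive : Prop :=
  forall a, exists w, forall a', a' != a -> uS a' w < uS a w /\ uR a' w < uR a w.

Definition argmaxA (f : A -> R) : {set A} := [set a | [forall a', f a' <= f a]].

Definition exp_uR (B : {set W}) (a : A) : R := \sum_(w in B) mu0 w * uR a w.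

Definition partitional_unique_response : Prop :=
  forall B : {set W}, B != set0 -> #|argmaxA (exp_uR B)| = 1%N.

(* Rows of the expanded-indifference matrix T^i (for action ai):
   inl (inl aj) : uS(aj) - uS(ai), aj != ai;
   inl (inr aj) : uR(aj) - uR(ai), aj != ai;
   inr w        : the w-th row of the identity matrix. *)
Definition T_row (ai : A) (r : (A + A) + W) (w : W) : R :=
  match r with
  | inl (inl aj) => uS aj w - uS ai w
  | inl (inr aj) => uR aj w - uR ai w
  | inr w' => (w' == w)%:R
  end.

Definition T_valid_row (ai : A) (r : (A + A) + W) : bool :=
  match r with
  | inl (inl aj) => aj != ai
  | inl (inr aj) => aj != ai
  | inr _ => true
  end.

Definition T_sub (ai : A) (X : {set (A + A) + W}) : 'M[R]_(#|X|, #|[set: W]|) :=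
  \matrix_(k, j) T_row ai (enum_val k) (enum_val j).

Definition scant_indifferences : Prop :=
  forall (ai : A) (X : {set (A + A) + W}),
    {subset X <= T_valid_row ai} ->
    \rank (T_sub ai X) = minn #|X| #|[set: W]|.

Definition OmegaS (a : A) : {set W} := [set w | [forall a', uS a' w <= uS a w]].

Definition felicitous : Prop :=
  forall a, OmegaS a != set0 -> a \in argmaxA (exp_uR (OmegaS a)).

End Game.

(* An equilibrium attaining the persuasion payoff induces an outcome (a joint
   law of actions and states) that maximises the sender's value among all
   obedient outcomes, since any obedient outcome is implemented by direct
   recommendations.  At such an optimum no mass can be shifted between two
   actions in a direction that is feasible to first order and profitable.
   Scant indifferences supplies such directions: if the receiver mixed after
   some on-path message, a linear system of full rank yields a profitable
   shift, and sender ties are impossible; hence the equilibrium is a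
   deterministic map act from states to actions.  By joint inclusiveness and
   the uniqueness of partitional responses, every action a is recommended at a
   state where it is best for both players, so sender incentive compatibility
   makes act w sender-optimal at every w.  The recommendation cells are thus
   the sets OmegaS a, and obedience of the outcome is exactly felicity. *)

From HB Require Import structures.
From mathcomp Require Import all_boot all_order all_algebra.
From mathcomp Require Import reals.
From mathcomp Require Import ring lra.
Import Order.TTheory GRing.Theory Num.Theory.
Local Open Scope ring_scope.
Set Implicit Arguments. Unset Strict Implicit. Unset Printing Implicit Defensive.

Lemma sum_delta (R : pzSemiRingType) (T : finType) (j : T) (F : T -> R) :
  \sum_i (i == j)%:R * F i = F j.
Proof.
by rewrite (bigD1 j) //= eqxx mul1r big1 ?addr0 // => i /negbTE ->; rewrite mul0r.
Qed.

Lemma sum_delta_diff (R : pzRingType) (T : finType) (j1 j2 : T) (F : T -> R) :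
  \sum_i ((i == j1)%:R - (i == j2)%:R) * F i = F j1 - F j2.
Proof. by under eq_bigr do rewrite mulrBl; rewrite sumrB !sum_delta. Qed.

Lemma sum_mulrBr (R : pzRingType) (T : finType) (d f g : T -> R) :
  \sum_i d i * (f i - g i) = \sum_i d i * f i - \sum_i d i * g i.
Proof. by under eq_bigr do rewrite mulrBr; rewrite sumrB. Qed.

Lemma small_step_nonneg (R : realFieldType) (I : finType) (P : pred I) (al be : I -> R) :
  (forall i, P i -> 0 < al i) ->
  exists2 t, 0 < t & forall s, 0 < s <= t -> forall i, P i -> 0 <= al i + s * be i.
Proof.
move=> al_gt0; have nb_gt0 i : 0 < `|be i| + 1 by rewrite ltr_wpDl.
exists (\big[Order.min/1]_(i | P i) (al i / (`|be i| + 1))).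
  by apply: lt_bigmin => // i Pi; rewrite divr_gt0 ?al_gt0.
move=> s /andP[s_gt0 s_le] i Pi.
have : s <= al i / (`|be i| + 1) by apply: le_trans s_le (bigmin_le_cond _ _ Pi).
rewrite ler_pdivlMr // mulrDr mulr1 => s_nb.
have /andP[nb _] : - `|be i| <= be i <= `|be i| by rewrite -ler_norml.
have := ler_wpM2l (ltW s_gt0) nb; lra.
Qed.

Section Distributions.
Variable R : realType.

Lemma is_dist_exists_pos (T : finType) (p : T -> R) : is_dist p -> exists i, 0 < p i.
Proof.
case=> p_ge0 p_sum; apply/existsP; apply: contraT => /existsPn p_le0.
suff : \sum_i p i = 0 by rewrite p_sum => /eqP; rewrite oner_eq0.
by apply: big1 => i _; apply/eqP; rewrite eq_le p_ge0 andbT leNgt p_le0.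
Qed.

Lemma is_dist_shift (T : finType) (p : T -> R) j1 j2 c :
  is_dist p -> 0 <= c <= p j2 ->
  is_dist (fun j => p j + c * ((j == j1)%:R - (j == j2)%:R)).
Proof.
case=> p_ge0 p_sum /andP[c_ge0 c_le]; split=> [j|].
  case: (eqVneq j j2) => [->|jj2]; last first.
    by rewrite subr0 addr_ge0 ?mulr_ge0 ?ler0n.
  case: (eqVneq j2 j1) => [->|_]; first by rewrite subrr mulr0 addr0.
  by rewrite sub0r mulrN1 subr_ge0.
rewrite big_split /= p_sum.
under [X in _ + X]eq_bigr do rewrite mulrC.
by rewrite (sum_delta_diff j1 j2 (fun=> c)) subrr addr0.
Qed.

Definition shift_mass (I J : finType) (p : I -> J -> R) i0 j1 j2 c i j :=
  p i j + (i == i0)%:R * c * ((j == j1)%:R - (j == j2)%:R).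

Lemma shift_mass_dist (I J : finType) (p : I -> J -> R) i0 j1 j2 c :
  (forall i, is_dist (p i)) -> 0 <= c <= p i0 j2 ->
  forall i, is_dist (shift_mass p i0 j1 j2 c i).
Proof.
move=> p_dist c_range i.
apply: (@is_dist_shift _ (p i) j1 j2 ((i == i0)%:R * c) (p_dist i)).
case: (eqVneq i i0) => [->|_]; first by rewrite mul1r.
by rewrite mul0r lexx; case: (p_dist i) => ->.
Qed.

Lemma sum_shift_mass (I J : finType) (p F : I -> J -> R) i0 j1 j2 c :
  \sum_i \sum_j shift_mass p i0 j1 j2 c i j * F i j
  = \sum_i \sum_j p i j * F i j + c * (F i0 j1 - F i0 j2).
Proof.
rewrite -(sum_delta i0 (fun i => c * (F i j1 - F i j2))) -big_split /=.
apply: eq_bigr => i _; rewrite /shift_mass.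
under eq_bigr do rewrite mulrDl.
rewrite big_split /=; congr (_ + _).
rewrite -sum_delta_diff !mulr_sumr; apply: eq_bigr => j _; ring.
Qed.

End Distributions.

Section ObedientOutcomes.
Variables (R : realType) (A W : finType) (mu0 : W -> R) (uS uR : A -> W -> R).

Definition obedience_slack (x : A -> W -> R) a b := \sum_w x a w * (uR a w - uR b w).

Definition obedient (x : A -> W -> R) :=
  [/\ forall a w, 0 <= x a w, forall w, \sum_a x a w = mu0 w &
      forall a b, 0 <= obedience_slack x a b].

Definition sender_value (x : A -> W -> R) := \sum_w \sum_a x a w * uS a w.

Definition optimal_obedient x :=
  obedient x /\ forall x', obedient x' -> sender_value x' <= sender_value x.

Lemma obedience_slackD x y t a b :
  obedience_slack (fun a w => x a w + t * y a w) a b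
  = obedience_slack x a b + t * obedience_slack y a b.
Proof. by rewrite /obedience_slack mulr_sumr -big_split; apply: eq_bigr => w _ /=; ring. Qed.

Lemma sender_valueD x y t :
  sender_value (fun a w => x a w + t * y a w) = sender_value x + t * sender_value y.
Proof.
rewrite /sender_value mulr_sumr -big_split; apply: eq_bigr => w _.
by rewrite mulr_sumr -big_split; apply: eq_bigr => a _ /=; ring.
Qed.

Lemma obedient_perturb x y :
  obedient x -> (forall w, \sum_a y a w = 0) ->
  (forall a w, x a w = 0 -> 0 <= y a w) ->
  (forall a b, obedience_slack x a b = 0 -> 0 <= obedience_slack y a b) ->
  exists2 t, 0 < t & obedient (fun a w => x a w + t * y a w).
Proof.
case=> x_ge0 x_marg x_slack y_marg y_supp y_slack.
have [t1 t1_gt0 t1_ok] : exists2 t1, 0 < t1 & forall s, 0 < s <= t1 ->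
    forall p : A * W, x p.1 p.2 != 0 -> 0 <= x p.1 p.2 + s * y p.1 p.2.
  by apply: small_step_nonneg => p xp; rewrite lt0r xp x_ge0.
have [t2 t2_gt0 t2_ok] : exists2 t2, 0 < t2 & forall s, 0 < s <= t2 ->
    forall p : A * A, obedience_slack x p.1 p.2 != 0 ->
    0 <= obedience_slack x p.1 p.2 + s * obedience_slack y p.1 p.2.
  by apply: small_step_nonneg => p sp; rewrite lt0r sp x_slack.
have t_gt0 : 0 < Num.min t1 t2 by rewrite lt_min t1_gt0 t2_gt0.
exists (Num.min t1 t2) => //; split=> [a w|w|a b].
- have [x0|xn] := eqVneq (x a w) 0.
    by rewrite x0 add0r; apply: mulr_ge0; [exact: ltW | exact: y_supp].
  by apply: (t1_ok _ _ (a, w)); rewrite ?t_gt0 ?ge_min ?lexx.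
- by rewrite big_split /= -mulr_sumr y_marg mulr0 addr0 x_marg.
- rewrite obedience_slackD; have [s0|sn] := eqVneq (obedience_slack x a b) 0.
    by rewrite s0 add0r; apply: mulr_ge0; [exact: ltW | exact: y_slack].
  by apply: (t2_ok _ _ (a, b)); rewrite ?t_gt0 ?ge_min ?lexx ?orbT.
Qed.

(* The hypotheses say that moving the mass [d] from [a2] to [a1] preserves
   obedience to first order. *)
Lemma optimal_shift x a1 a2 (d : W -> R) :
  optimal_obedient x -> a1 != a2 ->
  (forall w, x a1 w = 0 -> 0 <= d w) ->
  (forall w, x a2 w = 0 -> d w <= 0) ->
  (forall b, obedience_slack x a1 b = 0 -> 0 <= \sum_w d w * (uR a1 w - uR b w)) ->
  (forall b, obedience_slack x a2 b = 0 -> \sum_w d w * (uR a2 w - uR b w) <= 0) ->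
  \sum_w d w * (uS a1 w - uS a2 w) <= 0.
Proof.
move=> [x_obd x_max] a12 d1 d2 slack1 slack2.
pose e a : R := (a == a1)%:R - (a == a2)%:R.
have e1 : e a1 = 1 by rewrite /e eqxx (negbTE a12) subr0.
have e2 : e a2 = -1 by rewrite /e eqxx eq_sym (negbTE a12) sub0r.
have e0 a : a != a1 -> a != a2 -> e a = 0 by rewrite /e => /negbTE-> /negbTE->; rewrite subrr.
pose y a w := e a * d w.
have [t t_gt0 obd] : exists2 t, 0 < t & obedient (fun a w => x a w + t * y a w).
  apply: obedient_perturb => // [w|a w|a b].
  - by rewrite (sum_delta_diff a1 a2 (fun=> d w)) subrr.
  - have [->|na1] := eqVneq a a1; first by rewrite /y e1 mul1r; apply: d1.
    have [->|na2] := eqVneq a a2; first by rewrite /y e2 mulN1r oppr_ge0; apply: d2.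
    by rewrite /y e0 // mul0r.
  - have -> : obedience_slack y a b = e a * \sum_w d w * (uR a w - uR b w).
      by rewrite /obedience_slack mulr_sumr; apply: eq_bigr => w _; rewrite mulrA.
    have [->|na1] := eqVneq a a1; first by rewrite e1 mul1r; apply: slack1.
    have [->|na2] := eqVneq a a2; first by rewrite e2 mulN1r oppr_ge0; apply: slack2.
    by rewrite e0 // mul0r.
have := x_max _ obd; rewrite sender_valueD gerDl (pmulr_rle0 _ t_gt0).
suff -> : sender_value y = \sum_w d w * (uS a1 w - uS a2 w) by [].
apply: eq_bigr => w _; rewrite mulrBr -(sum_delta_diff a1 a2 (fun a => d w * uS a w)).
by apply: eq_bigr => a _; rewrite /y /e; ring.
Qed.

End ObedientOutcomes.

Section ScantIndifferences.
Variables (R : realType) (A W : finType) (uS uR : A -> W -> R).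
Hypothesis scant : scant_indifferences uS uR.

Lemma sum_enum_setT (F : W -> R) : \sum_w F w = \sum_(j < #|[set: W]|) F (enum_val j).
Proof. by rewrite -(big_enum_val F); apply: eq_bigl => w; rewrite inE. Qed.

Lemma T_row_inr_sum ai w' (d : W -> R) : \sum_w T_row uS uR ai (inr w') w * d w = d w'.
Proof. by rewrite -(sum_delta w' d); apply: eq_bigr => w _; rewrite /= eq_sym. Qed.

Lemma scant_kernel_card ai (X : {set (A + A) + W}) (v : W -> R) :
  {subset X <= T_valid_row ai} -> (exists w, v w != 0) ->
  (forall r, r \in X -> \sum_w T_row uS uR ai r w * v w = 0) ->
  (#|X| < #|W|)%N.
Proof.
move=> X_valid [w0 vw0] v_ker; rewrite ltnNge; apply/negP => W_le.
have T_free : row_free (T_sub uS uR ai X)^T.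
  by rewrite /row_free mxrank_tr scant // cardsT (minn_idPr W_le).
pose vv : 'rV[R]_#|[set: W]| := \row_j v (enum_val j).
have : vv *m (T_sub uS uR ai X)^T = 0 *m (T_sub uS uR ai X)^T.
  rewrite mul0mx; apply/rowP => k; rewrite !mxE -[RHS](v_ker (enum_val k)) ?enum_valP //.
  by rewrite sum_enum_setT; apply: eq_bigr => j _; rewrite !mxE mulrC.
move/(row_free_inj T_free)/rowP/(_ (enum_rank_in (in_setT w0) w0)).
by rewrite !mxE enum_rankK_in ?in_setT // => /eqP; rewrite (negbTE vw0).
Qed.

Lemma scant_solvable ai (X : {set (A + A) + W}) (tg : (A + A) + W -> R) :
  {subset X <= T_valid_row ai} -> (#|X| <= #|W|)%N ->
  exists d : W -> R, forall r, r \in X -> \sum_w T_row uS uR ai r w * d w = tg r.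
Proof.
move=> X_valid X_le.
have [->|[r0 r0X]] := set_0Vmem X; first by exists (fun=> 0) => r; rewrite inE.
have /card_gt0P[w0 _] : (0 < #|W|)%N by apply: leq_trans X_le; apply/card_gt0P; exists r0.
have T_full : row_full (T_sub uS uR ai X)^T.
  by rewrite /row_full mxrank_tr scant // cardsT (minn_idPl X_le).
pose tv : 'rV[R]_#|X| := \row_k tg (enum_val k).
have /submxP[D tvE] : (tv <= (T_sub uS uR ai X)^T)%MS by exact: submx_full.
exists (fun w => D 0 (enum_rank_in (in_setT w0) w)) => r rX.
have := congr1 (fun N : 'rV[R]_#|X| => N 0 (enum_rank_in rX r)) tvE.
rewrite !mxE enum_rankK_in // => ->; rewrite sum_enum_setT; apply: eq_bigr => j _.
by rewrite !mxE enum_rankK_in ?enum_valK_in // mulrC.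
Qed.

Lemma scant_uS_neq ai aj w : aj != ai -> uS aj w != uS ai w.
Proof.
move=> aji; apply/negP => /eqP uS_eq.
pose X : {set (A + A) + W} := inl (inl aj) |: (inr @: [set~ w]).
have X_valid : {subset X <= T_valid_row ai}.
  by move=> r /setU1P[->|/imsetP[w' _ ->]]; rewrite unfold_in.
suff : (#|X| < #|W|)%N.
  rewrite cardsU1 card_imset; last by move=> ? ? [].
  have /negbTE-> : (inl (inl aj) : (A + A) + W) \notin inr @: [set~ w].
    by apply/negP => /imsetP[].
  by rewrite cardsC1 add1n prednK ?ltnn //; apply/card_gt0P; exists w.
apply: (scant_kernel_card (v := fun w' => (w' == w)%:R) X_valid).
  by exists w; rewrite eqxx oner_eq0.
move=> r /setU1P[->|/imsetP[w' w'w ->]].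
  by under eq_bigr do rewrite mulrC; rewrite sum_delta /= uS_eq subrr.
by rewrite T_row_inr_sum; move: w'w; rewrite in_setC1 => /negbTE->.
Qed.

(* Solve for [d] on the [uS]-row of [c2], the [uR]-rows of the actions tied with
   [c1] under [q], and the coordinates where [q] vanishes: [q] is a nonzero
   kernel vector of all but the first of these rows, so there are at most
   [#|W|] of them, and they are independent by scant indifferences. *)
Lemma scant_shift_direction (q : W -> R) c1 c2 : c2 != c1 -> (exists w, q w != 0) ->
  exists d : W -> R,
  [/\ forall w, q w = 0 -> d w = 0,
      forall b, \sum_w q w * uR b w = \sum_w q w * uR c1 w ->
                \sum_w d w * uR b w = \sum_w d w * uR c1 w
    & \sum_w d w * (uS c2 w - uS c1 w) = 1].
Proof.
move=> c21 q_nz.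
pose X0 : {set (A + A) + W} := [set r | match r with
  | inl (inl _) => false
  | inl (inr b) => (b != c1) && (\sum_w q w * uR b w == \sum_w q w * uR c1 w)
  | inr w => q w == 0 end].
pose X := inl (inl c2) |: X0.
have X_valid : {subset X <= T_valid_row c1}.
  move=> r /setU1P[->|]; first by rewrite unfold_in.
  by rewrite inE unfold_in; case: r => [[]|] // b /andP[].
have X0_lt : (#|X0| < #|W|)%N.
  apply: (scant_kernel_card (v := q) _ q_nz) => [r rX0|].
    by apply: X_valid; rewrite setU1r.
  move=> [[a|b]|w]; rewrite inE //=.
  - move=> /andP[_ /eqP tie].
    by under eq_bigr do rewrite mulrC; rewrite sum_mulrBr tie subrr.
  - by move=> /eqP qw0; rewrite T_row_inr_sum.
have [|d dE] := scant_solvable (fun r => (r == inl (inl c2))%:R) X_valid.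
  by rewrite cardsU1; apply: leq_trans X0_lt; rewrite -add1n leq_add2r leq_b1.
have dE0 r : r \in X0 -> \sum_w T_row uS uR c1 r w * d w = 0.
  move=> rX0; rewrite dE ?setU1r //; case: eqP rX0 => // -> ; by rewrite inE.
exists d; split=> [w qw0|b tie|].
- by rewrite -(T_row_inr_sum c1 w d) dE0 // inE qw0.
- have [->//|bc1] := eqVneq b c1; apply/eqP; rewrite -subr_eq0 -sum_mulrBr.
  have := dE0 (inl (inr b)); rewrite inE bc1 tie eqxx => /(_ isT) row_b.
  by rewrite -[X in _ == X]row_b; apply/eqP; apply: eq_bigr => w _; rewrite mulrC.
- have := dE _ (setU11 _ _); rewrite eqxx => row_c2.
  by rewrite -[RHS]row_c2; apply: eq_bigr => w _; rewrite mulrC.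
Qed.

End ScantIndifferences.

Section ProfileOutcome.
Variables (R : realType) (A W M : finType) (mu0 : W -> R).

Definition outcome (sigma : W -> M -> R) (rho : M -> A -> R) a w :=
  mu0 w * \sum_m sigma w m * rho m a.

Lemma payoff_outcome (u : A -> W -> R) sigma rho :
  payoff mu0 u sigma rho = \sum_w \sum_a outcome sigma rho a w * u a w.
Proof.
apply: eq_bigr => w _; rewrite exchange_big; apply: eq_bigr => a _.
by rewrite /outcome mulr_sumr mulr_suml; apply: eq_bigr => m _; rewrite !mulrA.
Qed.

End ProfileOutcome.

Section DirectRecommendation.
Variables (R : realType) (A W M : finType) (mu0 : W -> R) (uS uR : A -> W -> R).
Hypothesis mu0_gt0 : forall w, 0 < mu0 w.
Hypothesis AM : (#|A| <= #|M|)%N.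
Variables (a0 : A) (x : A -> W -> R).
Hypothesis x_obedient : obedient mu0 uR x.

Definition recommend (a : A) : M := enum_val (widen_ord AM (enum_rank a)).

Lemma recommend_inj : injective recommend.
Proof. by move=> a b /enum_val_inj [] /val_inj /enum_rank_inj. Qed.

Definition rec_sigma w m := \sum_a (recommend a == m)%:R * (x a w / mu0 w).

Definition rec_rho m a : R :=
  (recommend a == m)%:R + (~~ [exists a', recommend a' == m])%:R * (a == a0)%:R.

Lemma rec_rho_recommend a' a : rec_rho (recommend a') a = (a == a')%:R.
Proof.
rewrite /rec_rho (inj_eq recommend_inj).
have -> : [exists a'', recommend a'' == recommend a'] by apply/existsP; exists a'.
by rewrite mul0r addr0.
Qed.

Lemma outcome_rec_sigma (rho : M -> A -> R) a w :
  outcome mu0 rec_sigma rho a w = \sum_a' x a' w * rho (recommend a') a.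
Proof.
rewrite /outcome /rec_sigma; under eq_bigr do rewrite mulr_suml.
rewrite exchange_big mulr_sumr; apply: eq_bigr => a' _.
have -> : \sum_m (recommend a' == m)%:R * (x a' w / mu0 w) * rho m a
          = x a' w / mu0 w * rho (recommend a') a.
  rewrite -(sum_delta (recommend a') (fun m => x a' w / mu0 w * rho m a)).
  by apply: eq_bigr => m _; rewrite eq_sym -mulrA.
by rewrite mulrA [mu0 w * _]mulrC divfK ?lt0r_neq0.
Qed.

Lemma outcome_rec a w : outcome mu0 rec_sigma rec_rho a w = x a w.
Proof.
rewrite outcome_rec_sigma -(sum_delta a (x ^~ w)).
by apply: eq_bigr => a' _; rewrite rec_rho_recommend eq_sym mulrC.
Qed.

Lemma rec_sigma_strategy : msg_strategy rec_sigma.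
Proof.
case: x_obedient => x_ge0 x_marg _ w; split=> [m|].
  apply: sumr_ge0 => a _; apply: mulr_ge0; first exact: ler0n.
  by apply: divr_ge0; [exact: x_ge0 | exact: ltW].
rewrite exchange_big /= (eq_bigr (fun a => x a w / mu0 w)) => [|a _].
  by rewrite -mulr_suml x_marg divff ?lt0r_neq0.
rewrite -[RHS](sum_delta (recommend a) (fun=> x a w / mu0 w)).
by apply: eq_bigr => m _; rewrite eq_sym.
Qed.

Lemma rec_rho_strategy : act_strategy rec_rho.
Proof.
move=> m; split=> [a|]; first by rewrite addr_ge0 ?mulr_ge0 ?ler0n.
have [/existsP[a' /eqP <-]|off] := boolP [exists a', recommend a' == m].
  by rewrite -(sum_delta a' (fun=> 1)); apply: eq_bigr => a _; rewrite rec_rho_recommend mulr1.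
rewrite -(sum_delta a0 (fun=> 1)); apply: eq_bigr => a _; rewrite /rec_rho off mulr1 mul1r.
suff /negbTE-> : recommend a != m by rewrite add0r.
by apply: contra off => ram; apply/existsP; exists a.
Qed.

Lemma rec_R_BR : R_BR mu0 uR rec_sigma rec_rho.
Proof.
case: x_obedient => _ _ x_slack rho rho_strat.
have -> : UR mu0 uR rec_sigma rec_rho = \sum_a' \sum_w x a' w * uR a' w.
  rewrite /UR payoff_outcome exchange_big; apply: eq_bigr => a _.
  by apply: eq_bigr => w _; rewrite outcome_rec.
have -> : UR mu0 uR rec_sigma rho =
    \sum_a' \sum_a rho (recommend a') a * \sum_w x a' w * uR a w.
  rewrite /UR payoff_outcome; under eq_bigr do under eq_bigr do
    rewrite outcome_rec_sigma mulr_suml.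
  rewrite exchange_big; under eq_bigr do rewrite exchange_big.
  rewrite exchange_big; apply: eq_bigr => a' _; apply: eq_bigr => a _.
  by rewrite mulr_sumr; apply: eq_bigr => w _ /=; ring.
apply: ler_sum => a' _; have [rho_ge0 rho_sum] := rho_strat (recommend a').
rewrite -[X in _ <= X]mul1r -rho_sum mulr_suml; apply: ler_sum => a _.
by rewrite ler_wpM2l // -subr_ge0 -sum_mulrBr; exact: x_slack.
Qed.

Lemma obedient_persuasion_value : persuasion_values M mu0 uS uR (sender_value uS x).
Proof.
exists rec_sigma, rec_rho; split; [exact: rec_sigma_strategy | exact: rec_rho_strategy |
  exact: rec_R_BR |].
rewrite /US payoff_outcome; apply: eq_bigr => w _.
by apply: eq_bigr => a _; rewrite outcome_rec.
Qed.

End DirectRecommendation.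

Section Equilibrium.
Variables (R : realType) (A W M : finType) (mu0 : W -> R) (uS uR : A -> W -> R).
Hypothesis mu0_gt0 : forall w, 0 < mu0 w.
Variables (sigma : W -> M -> R) (rho : M -> A -> R).
Hypotheses (sigma_strat : msg_strategy sigma) (rho_strat : act_strategy rho).
Hypotheses (sigma_BR : S_BR mu0 uS sigma rho) (rho_BR : R_BR mu0 uR sigma rho).

Definition msg_weight m w := mu0 w * sigma w m.
Definition msg_uR m a := \sum_w msg_weight m w * uR a w.
Definition msg_uS m w := \sum_a rho m a * uS a w.

Lemma UR_by_msg (rho' : M -> A -> R) :
  UR mu0 uR sigma rho' = \sum_m \sum_a rho' m a * msg_uR m a.
Proof.
rewrite /UR /payoff exchange_big; apply: eq_bigr => m _.
rewrite exchange_big; apply: eq_bigr => a _.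
by rewrite mulr_sumr; apply: eq_bigr => w _; rewrite /msg_weight; ring.
Qed.

Lemma US_by_state (sigma' : W -> M -> R) :
  US mu0 uS sigma' rho = \sum_w \sum_m sigma' w m * (mu0 w * msg_uS m w).
Proof.
apply: eq_bigr => w _; apply: eq_bigr => m _.
by rewrite /msg_uS !mulr_sumr; apply: eq_bigr => a _; ring.
Qed.

Lemma receiver_IC m a b : 0 < rho m a -> msg_uR m b <= msg_uR m a.
Proof.
move=> rho_pos.
have rho'_strat : act_strategy (shift_mass rho m b a (rho m a)).
  by apply: shift_mass_dist => //; rewrite lexx andbT ltW.
have := rho_BR rho'_strat.
by rewrite !UR_by_msg sum_shift_mass gerDl (pmulr_rle0 _ rho_pos) subr_le0.
Qed.

Lemma sender_IC w m m' : 0 < sigma w m -> msg_uS m' w <= msg_uS m w.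
Proof.
move=> sigma_pos.
have sigma'_strat : msg_strategy (shift_mass sigma w m' m (sigma w m)).
  by apply: shift_mass_dist => //; rewrite lexx andbT ltW.
have := sigma_BR sigma'_strat.
by rewrite !US_by_state sum_shift_mass gerDl (pmulr_rle0 _ sigma_pos) subr_le0 ler_pM2l.
Qed.

Lemma slack_outcome a b :
  obedience_slack uR (outcome mu0 sigma rho) a b
  = \sum_m rho m a * (msg_uR m a - msg_uR m b).
Proof.
rewrite /obedience_slack /outcome; under eq_bigr do rewrite mulr_sumr mulr_suml.
rewrite exchange_big; apply: eq_bigr => m _.
by rewrite -sumrB mulr_sumr; apply: eq_bigr => w _; rewrite /msg_weight; ring.
Qed.

Lemma slack_outcome_term_ge0 m a b : 0 <= rho m a * (msg_uR m a - msg_uR m b).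
Proof.
have [rho0|rho_ne0] := eqVneq (rho m a) 0; first by rewrite rho0 mul0r.
have rho_pos : 0 < rho m a by rewrite lt0r rho_ne0; case: (rho_strat m) => ->.
by apply: mulr_ge0; [exact: ltW | rewrite subr_ge0 receiver_IC].
Qed.

Lemma slack_outcome_ge m a b :
  rho m a * (msg_uR m a - msg_uR m b) <= obedience_slack uR (outcome mu0 sigma rho) a b.
Proof.
rewrite slack_outcome (bigD1 m) //= lerDl.
by apply: sumr_ge0 => m' _; apply: slack_outcome_term_ge0.
Qed.

Lemma outcome_ge m a w : msg_weight m w * rho m a <= outcome mu0 sigma rho a w.
Proof.
rewrite /outcome /msg_weight -mulrA; apply: ler_wpM2l; first exact: ltW.
rewrite (bigD1 m) //= lerDl; apply: sumr_ge0 => m' _.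
by apply: mulr_ge0; [case: (sigma_strat w) | case: (rho_strat m')].
Qed.

Lemma outcome_obedient : obedient mu0 uR (outcome mu0 sigma rho).
Proof.
split=> [a w|w|a b].
- apply: mulr_ge0; first exact: ltW.
  apply: sumr_ge0 => m _; apply: mulr_ge0; first by case: (sigma_strat w).
  by case: (rho_strat m).
- rewrite /outcome -mulr_sumr exchange_big -[RHS]mulr1; congr (_ * _).
  have [_ <-] := sigma_strat w; apply: eq_bigr => m _.
  by rewrite -mulr_sumr; have [_ ->] := rho_strat m; rewrite mulr1.
- by rewrite slack_outcome; apply: sumr_ge0 => m _; apply: slack_outcome_term_ge0.
Qed.

Section OptimalEquilibrium.
Hypothesis opt : optimal_obedient mu0 uS uR (outcome mu0 sigma rho).
Hypothesis scant : scant_indifferences uS uR.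

Lemma receiver_pure_on_path w m c1 c2 :
  0 < sigma w m -> 0 < rho m c1 -> 0 < rho m c2 -> c1 = c2.
Proof.
move=> sigma_pos rho1 rho2; apply/eqP; apply: contraT => c12.
have q_ge0 w' : 0 <= msg_weight m w'.
  by apply: mulr_ge0; [exact: ltW | case: (sigma_strat w')].
have q_nz : exists w', msg_weight m w' != 0.
  by exists w; rewrite mulf_neq0 ?lt0r_neq0.
have tie c b : 0 < rho m c ->
    obedience_slack uR (outcome mu0 sigma rho) c b = 0 -> msg_uR m b = msg_uR m c.
  move=> rho_c slack0; apply/eqP; rewrite eq_le receiver_IC //=.
  by have := slack_outcome_ge m c b; rewrite slack0 (pmulr_rle0 _ rho_c) subr_le0.
have vanish c w' : 0 < rho m c -> outcome mu0 sigma rho c w' = 0 -> msg_weight m w' = 0.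
  move=> rho_c out0; apply/eqP; rewrite eq_le q_ge0 andbT.
  by have := outcome_ge m c w'; rewrite out0 (pmulr_lle0 _ rho_c).
have tie12 : msg_uR m c2 = msg_uR m c1 by apply/eqP; rewrite eq_le !receiver_IC.
have c21 : c2 != c1 by rewrite eq_sym.
have [d [d0 d_tie d_gain]] := scant_shift_direction scant c21 q_nz.
have := optimal_shift opt (a1 := c2) (a2 := c1) (d := d).
rewrite d_gain ler10; apply=> //.
- by move=> w' /(vanish _ _ rho2)/d0->.
- by move=> w' /(vanish _ _ rho1)/d0->.
- move=> b /(tie _ _ rho2); rewrite tie12 => /d_tie.
  by rewrite sum_mulrBr (d_tie c2 tie12) => ->; rewrite subrr.
- by move=> b /(tie _ _ rho1)/d_tie; rewrite sum_mulrBr => ->; rewrite subrr.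
Qed.

Lemma rho_pure_on_path w m c :
  0 < sigma w m -> 0 < rho m c -> forall a, rho m a = (a == c)%:R.
Proof.
move=> sigma_pos rho_c.
have rho0 a : a != c -> rho m a = 0.
  move=> ac; apply/eqP; rewrite eq_le (proj1 (rho_strat m)) andbT leNgt.
  by apply: contra ac => rho_a; rewrite (receiver_pure_on_path sigma_pos rho_a rho_c).
move=> a; have [->|ac] := eqVneq a c; last by rewrite rho0.
have [_ rho_sum] := rho_strat m.
apply: etrans rho_sum.
by rewrite (bigD1 c) //= big1 ?addr0 // => a' /rho0.
Qed.

Lemma msg_uS_pure m c w : (forall a, rho m a = (a == c)%:R) -> msg_uS m w = uS c w.
Proof.
by move=> rhoE; rewrite -(sum_delta c (uS^~ w)); apply: eq_bigr => a _; rewrite rhoE.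
Qed.

Lemma onpath_action w : exists c, forall m, 0 < sigma w m -> forall a, rho m a = (a == c)%:R.
Proof.
have [m0 sigma0] := is_dist_exists_pos (sigma_strat w).
have [c rho0] := is_dist_exists_pos (rho_strat m0).
exists c => m sigma_m; have [c' rho_c'] := is_dist_exists_pos (rho_strat m).
suff <- : c' = c by exact: rho_pure_on_path sigma_m rho_c'.
have [//|c'c] := eqVneq c' c; have := scant_uS_neq scant w c'c.
rewrite -(msg_uS_pure w (rho_pure_on_path sigma_m rho_c')).
rewrite -(msg_uS_pure w (rho_pure_on_path sigma0 rho0)).
by rewrite eq_le !sender_IC.
Qed.

Lemma equilibrium_pure : exists act : W -> A,
  (forall a w, outcome mu0 sigma rho a w = mu0 w * (a == act w)%:R) /\
  (forall w w', uS (act w') w <= uS (act w) w).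
Proof.
have [act actE] := fin_all_exists onpath_action.
exists act; split=> [a w|w w'].
  rewrite /outcome; congr (_ * _); have [sigma_ge0 sigma_sum] := sigma_strat w.
  rewrite (eq_bigr (fun m => sigma w m * (a == act w)%:R)) => [|m _].
    by rewrite -mulr_suml sigma_sum mul1r.
  have := sigma_ge0 m; rewrite le_eqVlt => /orP[/eqP <-|sigma_pos].
    by rewrite !mul0r.
  by rewrite (actE w m sigma_pos).
have [m sigma_m] := is_dist_exists_pos (sigma_strat w).
have [m' sigma_m'] := is_dist_exists_pos (sigma_strat w').
rewrite -(msg_uS_pure w (actE _ _ sigma_m')) -(msg_uS_pure w (actE _ _ sigma_m)).
exact: sender_IC.
Qed.

End OptimalEquilibrium.
End Equilibrium.

Section PureOutcome.
Variables (R : realType) (A W : finType) (mu0 : W -> R) (uS uR : A -> W -> R).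
Hypothesis mu0_gt0 : forall w, 0 < mu0 w.
Hypotheses (joint : jointly_inclusive uS uR) (pur : partitional_unique_response mu0 uR)
  (scant : scant_indifferences uS uR).
Variables (act : W -> A) (x : A -> W -> R).
Hypothesis xE : forall a w, x a w = mu0 w * (a == act w)%:R.
Hypothesis x_opt : optimal_obedient mu0 uS uR x.
Hypothesis act_IC : forall w w', uS (act w') w <= uS (act w) w.

Definition recommended a := [set w | act w == a].

Lemma slack_pure a b :
  obedience_slack uR x a b
  = exp_uR mu0 uR (recommended a) a - exp_uR mu0 uR (recommended a) b.
Proof.
rewrite /exp_uR -sumrB [RHS]big_mkcond /=; apply: eq_bigr => w _.
rewrite xE inE eq_sym; case: eqP => _.
  by rewrite mulr1 mulrBr.
by rewrite mulr0 mul0r.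
Qed.

Lemma recommended_in_argmax a : a \in argmaxA (exp_uR mu0 uR (recommended a)).
Proof.
case: x_opt => -[_ _ x_slack] _; rewrite inE; apply/forallP => b.
by rewrite -subr_ge0 -slack_pure.
Qed.

Lemma act_jointly_best a w :
  (forall a', a' != a -> uS a' w < uS a w /\ uR a' w < uR a w) -> act w = a.
Proof.
move=> best; have [//|ca] := eqVneq (act w) a; set c := act w in ca *.
have slack_c b : b != c -> obedience_slack uR x c b != 0.
  move=> bc; rewrite slack_pure subr_eq0; apply: contra bc => /eqP tie.
  have c_cell : recommended c != set0 by apply/set0Pn; exists w; rewrite inE.
  have /eqP/cards1P[z zE] := pur c_cell.
  have := recommended_in_argmax c; rewrite zE inE => /eqP->.
  suff : b \in argmaxA (exp_uR mu0 uR (recommended c)) by rewrite zE inE.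
  by have := recommended_in_argmax c; rewrite !inE tie.
suff : \sum_w' (w' == w)%:R * (uS a w' - uS c w') <= 0.
  by rewrite sum_delta subr_le0 leNgt (proj1 (best c ca)).
apply: optimal_shift x_opt _ _ _ _ _ => [||w'|b _|b].
- by rewrite eq_sym.
- by move=> w' _; rewrite ler0n.
- have [->|_] := eqVneq w' w; last by rewrite lexx.
  rewrite xE eqxx mulr1 => mu0w.
  by have := mu0_gt0 w; rewrite mu0w ltxx.
- rewrite sum_delta; have [->|ba] := eqVneq b a; first by rewrite subrr.
  by rewrite subr_ge0 ltW // (proj2 (best b ba)).
- have [->|bc /eqP] := eqVneq b c; first by rewrite sum_delta subrr.
  by rewrite (negbTE (slack_c b bc)).
Qed.

Lemma act_sender_best w a : uS a w <= uS (act w) w.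
Proof. by have [wa best] := joint a; rewrite -[a](act_jointly_best best). Qed.

Lemma OmegaS_recommended a : OmegaS uS a = recommended a.
Proof.
apply/setP => w; rewrite !inE; apply/forallP/eqP => [best|<- a']; last first.
  exact: act_sender_best.
apply/eqP; apply: contraT => ne; have := scant_uS_neq scant w ne.
by rewrite eq_le best act_sender_best.
Qed.

Lemma pure_felicitous : felicitous mu0 uS uR.
Proof. by move=> a _; rewrite OmegaS_recommended; exact: recommended_in_argmax. Qed.

End PureOutcome.

Theorem lemma8 (R : realType) (A W M : finType)
  (hA : (0 < #|A|)%N) (hW : (0 < #|W|)%N)
  (hM : (maxn #|W| #|A| < #|M|)%N)
  (mu0 : W -> R) (hmu0 : is_dist mu0) (hmu0pos : forall w, 0 < mu0 w)
  (uS uR : A -> W -> R)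
  (huS : forall a w, 0 <= uS a w <= 1) (huR : forall a w, 0 <= uR a w <= 1) :
  jointly_inclusive uS uR ->
  partitional_unique_response mu0 uR ->
  scant_indifferences uS uR ->
  commitment_no_value M mu0 uS uR ->
  felicitous mu0 uS uR.
Proof.
move=> joint pur scant [v [[_ v_max] [[sigma [rho eqm] _]]]].
case: eqm => sigma_strat rho_strat S_BR R_BR v_eq.
have AM : (#|A| <= #|M|)%N by apply/ltnW/leq_ltn_trans/hM; exact: leq_maxr.
have /card_gt0P[a0 _] := hA.
have x_opt : optimal_obedient mu0 uS uR (outcome mu0 sigma rho).
  split=> [|x x_obd]; first exact: outcome_obedient.
  rewrite /sender_value -payoff_outcome -/(US mu0 uS sigma rho) -v_eq.
  exact/v_max/(obedient_persuasion_value uS hmu0pos AM a0).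
have [act [xE act_IC]] := equilibrium_pure hmu0pos sigma_strat rho_strat S_BR R_BR x_opt scant.
exact: (pure_felicitous hmu0pos joint pur scant xE x_opt act_IC).
Qed.
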